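(* Let $c\ge 1$ and $k\ge 1$ be integers and let $n$ satisfy $c+1\le n\le ck+1$. Consider the equivalence relation on $S_n$ generated by the replacement partition of $S_{c+1}$ whose only nontrivial part is $\{x\in S_{c+1}: x_1=1\}$. Then every $k$-squished permutation $w\in S_n$ is equivalent to the identity permutation.
   Context: Permutations are written in one-line notation as words. The order permutation (standardization) of a word $u$ of distinct positive integers of length $\ell$ is the unique $\pi\in S_\ell$ with $\pi_i<\pi_j$ iff $u_i<u_j$. The equivalence is generated by declaring $\phi\equiv\psi$ whenever $\phi=aub$ and $\psi=avb$ for words $a,b,u,v$ with $u,v$ of length $c+1$ whose order permutations both begin with $1$. A permutation of $S_n$ is $k$-squished if for each $j\le k$, the letter $j$ occurs among the first $c(j-1)+1$ positions. *)

From mathcomp Require Import all_boot.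
From Stdlib Require Import Relations.
Set Implicit Arguments. Unset Strict Implicit. Unset Printing Implicit Defensive.

Definition is_perm (n : nat) (w : seq nat) : Prop := perm_eq w (iota 1 n).

(* Order permutation (standardization) of a word of distinct letters:
   the i-th letter becomes 1 + #{letters smaller than it}. *)
Definition std (u : seq nat) : seq nat :=
  map (fun x => (count (fun y => y < x) u).+1) u.

Definition std_begins_1 (u : seq nat) : Prop := head 0 (std u) = 1.

Definition repl_step (c n : nat) (phi psi : seq nat) : Prop :=
  is_perm n phi /\ is_perm n psi /\
  exists a b u v : seq nat,
    phi = a ++ u ++ b /\ psi = a ++ v ++ b /\
    size u = c.+1 /\ size v = c.+1 /\
    std_begins_1 u /\ std_begins_1 v.

Definition repl_equiv (c n : nat) : relation (seq nat) :=
  clos_refl_sym_trans (seq nat) (repl_step c n).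

Definition squished (c k : nat) (w : seq nat) : Prop :=
  forall j, 1 <= j <= k -> j \in take (c * (j - 1)).+1 w.

From mathcomp Require Import all_boot.
From Stdlib Require Import Relations.
From mathcomp Require Import zify.

(* Induction on n, removing the last letter x of a squished w.  Squishedness
   forces n <= c (x - 1), and deleting x and standardizing leaves a squished
   permutation of S_n, so by induction w is equivalent to the identity with x
   moved to the end.  If x - 1 > n - c, the last c + 1 letters form one window
   starting with its minimum n - c + 1, and sorting it gives the identity.
   Otherwise c >= 2, and a second squished word of S_n is chosen whose lift
   ends in the window x - 1, ..., n + 1, x; swapping its last two letters
   leaves n + 1 last, and induction applies once more.  The move used
   throughout rearranges a window of c + 1 letters behind its first letter
   when that letter is the window's minimum. *)

Set Implicit Arguments.
Unset Strict Implicit.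
Unset Printing Implicit Defensive.

Section ClosureTransport.

Variables (T U : Type) (R : relation T).

Lemma clos_rst_map (S : relation U) (f : T -> U) :
  (forall x y, R x y -> S (f x) (f y)) ->
  forall x y, clos_refl_sym_trans T R x y -> clos_refl_sym_trans U S (f x) (f y).
Proof.
move=> fRS x y; elim=> {x y} [x y /fRS | x | x y _ IH | x y z _ IHxy _ IHyz].
- exact: rst_step.
- exact: rst_refl.
- exact: rst_sym.
- exact: rst_trans IHxy IHyz.
Qed.

Variable P : T -> Prop.
Hypothesis RP : forall x y, R x y -> P x <-> P y.

Lemma clos_rst_inv x y : clos_refl_sym_trans T R x y -> P x <-> P y.
Proof.
elim=> {x y} [x y /RP | x | x y _ IH | x y z _ IHxy _ IHyz] //.
  by rewrite IH.
by rewrite IHxy IHyz.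
Qed.

Lemma clos_rst_sub_on (S : relation T) :
  (forall x y, P x -> R x y -> S x y) ->
  forall x y, P x -> clos_refl_sym_trans T R x y -> clos_refl_sym_trans T S x y.
Proof.
move=> RS x y Px xRy; elim: xRy Px => {x y}
  [x y xRy Px | x | x y xRy IH Py | x y z xRy IHxy _ IHyz Px].
- exact/rst_step/RS.
- by move=> _; apply: rst_refl.
- by apply/rst_sym/IH; rewrite (clos_rst_inv xRy).
- by apply: rst_trans (IHxy Px) (IHyz _); rewrite -(clos_rst_inv xRy).
Qed.

End ClosureTransport.

Lemma std_begins_1_cons y s : all (leq y) s -> std_begins_1 (y :: s).
Proof.
move=> y_min; rewrite /std_begins_1 /std /= ltnn; congr S.
apply/eqP; rewrite -leqn0 leqNgt -has_count; apply/hasPn => z /(allP y_min).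
by rewrite -leqNgt.
Qed.

(* Inside a permutation the two windows of a replacement step carry the same
   letters, and a window's standardization begins with 1 exactly when its first
   letter is its minimum. *)
Inductive window_move (c : nat) : seq nat -> seq nat -> Prop :=
  WindowMove a b y s t of size s = c & perm_eq s t & all (leq y) s :
    window_move c (a ++ y :: s ++ b) (a ++ y :: t ++ b).

Lemma window_move_end c a y s t :
  size s = c -> perm_eq s t -> all (leq y) s -> window_move c (a ++ y :: s) (a ++ y :: t).
Proof. by rewrite -[y :: s]cats0 -[y :: t]cats0; apply: WindowMove. Qed.

Definition window_equiv c := clos_refl_sym_trans (seq nat) (window_move c).

Lemma window_move_perm c u v : window_move c u v -> perm_eq u v.
Proof. by case=> a b y s t _ st _; rewrite perm_cat2l perm_cons perm_cat2r. Qed.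

Lemma window_equiv_repl_equiv c n u v :
  is_perm n u -> window_equiv c u v -> repl_equiv c n u v.
Proof.
apply: clos_rst_sub_on => [{}u {}v /window_move_perm /permPl uv | {}u {}v Pu uv].
  by rewrite /is_perm uv.
split=> //; split; first by rewrite /is_perm -(permPl (window_move_perm uv)).
case: uv => a b y s t size_s st y_min; exists a, b, (y :: s), (y :: t).
have size_t : size t = c by rewrite -(perm_size st).
rewrite /= size_s size_t; do 5!split=> //; apply: std_begins_1_cons => //.
by rewrite -(perm_all _ st).
Qed.

Lemma window_equiv_cat c a b u v :
  window_equiv c u v -> window_equiv c (a ++ u ++ b) (a ++ v ++ b).
Proof.
apply: (clos_rst_map (f := fun w => a ++ w ++ b)) => _ _ [a' b' y s t].
have cat_window w : a ++ (a' ++ y :: w ++ b') ++ b = (a ++ a') ++ y :: w ++ b' ++ b.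
  by rewrite -!catA /= -!catA.
by rewrite !cat_window; apply: WindowMove.
Qed.

Lemma window_equiv_lift c x u v :
  window_equiv c u v ->
  window_equiv c (rcons (map (bump x) u) x) (rcons (map (bump x) v) x).
Proof.
apply: (clos_rst_map (f := fun w => rcons (map (bump x) w) x)).
move=> _ _ [a b y s t size_s st y_min].
rewrite !(map_cat, map_cons, rcons_cat, rcons_cons).
apply: WindowMove; rewrite ?size_map ?perm_map // all_map.
by apply: sub_all y_min => z /=; rewrite leq_bump2.
Qed.

Lemma map_bump_iota_lo h a m : a + m <= h -> map (bump h) (iota a m) = iota a m.
Proof.
move=> le_h; rewrite -[RHS]map_id; apply/eq_in_map => l.
by rewrite mem_iota /bump => /andP[_ lt_l]; rewrite leqNgt (leq_trans lt_l le_h).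
Qed.

Lemma map_bump_iota_hi h a m : h <= a -> map (bump h) (iota a m) = iota a.+1 m.
Proof.
move=> le_h; rewrite -add1n iotaDl; apply/eq_in_map => l.
by rewrite mem_iota /bump => /andP[le_l _]; rewrite (leq_trans le_h le_l).
Qed.

Lemma iota1_split i n : i <= n -> iota 1 n = iota 1 i ++ iota i.+1 (n - i).
Proof. by move=> le_i; rewrite -{1}(subnKC le_i) iotaD add1n. Qed.

Lemma map_bump_iota1 i n :
  i <= n -> map (bump i.+1) (iota 1 n) = iota 1 i ++ iota i.+2 (n - i).
Proof.
move=> le_i; rewrite (iota1_split le_i) map_cat map_bump_iota_lo ?add1n //.
by rewrite map_bump_iota_hi.
Qed.

Definition move_to_end n x := rcons (map (bump x) (iota 1 n)) x.

Lemma is_perm_move_to_end n x : 0 < x <= n.+1 -> is_perm n.+1 (move_to_end n x).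
Proof.
case: x => [//|i] /= le_i; rewrite /is_perm /move_to_end map_bump_iota1 //.
rewrite (@iota1_split i n.+1) 1?ltnW // subSn //= -cats1 -catA.
by rewrite perm_cat2l perm_catC.
Qed.

Lemma is_perm_rcons n U x :
  is_perm n.+1 (rcons U x) -> [/\ 0 < x <= n.+1, x \notin U & size U = n].
Proof.
move=> Ux; split.
- by rewrite -mem_iota -(perm_mem Ux) mem_rcons mem_head.
- by have := perm_uniq Ux; rewrite iota_uniq rcons_uniq => /andP[].
- by have := perm_size Ux; rewrite size_rcons size_iota => -[].
Qed.

Lemma is_perm_unbump n U x : is_perm n.+1 (rcons U x) -> is_perm n (map (unbump x) U).
Proof.
move=> Ux; have [x_range _ _] := is_perm_rcons Ux.
have := is_perm_move_to_end x_range; rewrite /is_perm perm_sym => /(perm_trans Ux).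
rewrite perm_rcons perm_sym perm_rcons perm_cons perm_sym => /(perm_map (unbump x)).
by rewrite mapK //; apply: bumpK.
Qed.

Lemma map_bump_unbump x U : x \notin U -> map (bump x) (map (unbump x) U) = U.
Proof.
move=> xU; rewrite -map_comp map_id_in // => l lU /=.
by apply: unbumpK; apply: contraNneq xU => <-.
Qed.

Lemma last_letter_bound c n U x :
  is_perm n.+1 (rcons U x) -> squished c n.+1 (rcons U x) -> n <= c * (x - 1).
Proof.
move=> Ux sq; have [x_range xU size_U] := is_perm_rcons Ux.
rewrite leqNgt; apply/negP => small_x; move: (sq x x_range).
by rewrite -cats1 takel_cat ?size_U // => /mem_take; apply/negP.
Qed.

Lemma squished_unbump c n U x :
  is_perm n.+1 (rcons U x) -> squished c n.+1 (rcons U x) ->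
  squished c n (map (unbump x) U).
Proof.
move=> Ux sq j /andP[j_gt0 le_jn]; have [x_range xU size_U] := is_perm_rcons Ux.
have bound_x := last_letter_bound Ux sq.
case: (ltnP j x) => [lt_jx | le_xj].
  have jU : j \in take (c * (j - 1)).+1 U.
    move: (sq j); rewrite j_gt0 (leqW le_jn) -cats1 take_cat => /(_ isT).
    case: ifP => [_ // | /negbT]; rewrite -leqNgt => le_U.
    rewrite [take _ U]take_oversize // mem_cat.
    case/orP=> [// | /mem_take]; rewrite inE => /eqP eq_jx.
    by move: lt_jx; rewrite eq_jx ltnn.
  have unbump_j : unbump x j = j by rewrite /unbump ltnNge (ltnW lt_jx) subn0.
  by rewrite -map_take -[X in X \in _]unbump_j map_f.
rewrite take_oversize; last first.
  by rewrite size_map size_U ltnW // ltnS (leq_trans bound_x) ?leq_mul ?leq_sub2r.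
by rewrite (perm_mem (is_perm_unbump Ux)) mem_iota j_gt0 add1n ltnS.
Qed.

Lemma window_equiv_sorted_prefix c p w :
  is_perm (p + c.+1) w -> take p.+1 w = iota 1 p.+1 ->
  window_equiv c w (iota 1 (p + c.+1)).
Proof.
move=> w_perm w_prefix; have w_split := cat_take_drop p.+1 w.
rewrite w_prefix (@iota1_split p) // subSnn -catA /= in w_split.
set s := drop p.+1 w in w_split; rewrite -w_split.
have s_perm : perm_eq s (iota p.+2 c).
  by move: w_perm; rewrite -w_split /is_perm iotaD /= add1n perm_cat2l perm_cons.
rewrite iotaD add1n /=; apply/rst_step/window_move_end.
- by rewrite (perm_size s_perm) size_iota.
- exact: s_perm.
- by rewrite (perm_all _ s_perm); apply/allP => z; rewrite mem_iota => /andP[/ltnW].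
Qed.

Lemma move_to_end_equiv_high c n x :
  c <= n -> n - c < x - 1 -> x <= n.+1 -> window_equiv c (move_to_end n x) (iota 1 n.+1).
Proof.
case: x => [|i] le_cn; rewrite ?sub0n // subSS subn0 => lt_ci le_in.
have n_split : n.+1 = (n - c) + c.+1 by rewrite addnS subnK.
rewrite [in iota 1 n.+1]n_split; apply: window_equiv_sorted_prefix.
  by rewrite -n_split; apply: is_perm_move_to_end.
rewrite /move_to_end map_bump_iota1 // rcons_cat takel_cat ?size_iota // take_iota.
by rewrite (minn_idPl lt_ci).
Qed.

Lemma squished_iota_cat c n i M R :
  0 < c -> n <= c * i.+1 -> i + size M <= c * i -> i.+1 \notin M ->
  is_perm n (iota 1 i ++ M ++ i.+1 :: R) -> squished c n (iota 1 i ++ M ++ i.+1 :: R).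
Proof.
move=> c_gt0 n_le size_le iM w_perm j /andP[j_gt0 le_jn].
case: (ltngtP j i.+1) => [lt_ji | gt_ji | ->].
- have j_le : j <= (c * (j - 1)).+1.
    by rewrite -{1}(subnK j_gt0) addn1 ltnS leq_pmull.
  apply: (@mem_take j); rewrite take_takel // takel_cat ?size_iota // take_iota.
  by rewrite (minn_idPl (lt_ji : j <= i)) mem_iota add1n ltnSn andbT.
- rewrite take_oversize ?(perm_mem w_perm) ?mem_iota ?j_gt0 ?add1n //.
  rewrite (perm_size w_perm) size_iota ltnW // ltnS (leq_trans n_le) //.
  by rewrite leq_mul2l subn1 -ltnS prednK // gt_ji orbT.
- rewrite in_take; last by rewrite !mem_cat mem_head !orbT.
  have iota_i : i.+1 \in iota 1 i = false by rewrite mem_iota ltnn andbF.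
  by rewrite !index_cat iota_i (negbTE iM) /= eqxx addn0 size_iota subn1 ltnS.
Qed.

Section MoveToEndLow.

Variables (c n : nat).
Hypothesis c_gt0 : 0 < c.
Hypothesis IH : forall w, is_perm n w -> squished c n w -> window_equiv c w (iota 1 n).

Lemma move_to_end_equiv_low i :
  i.+1 + c <= n -> n <= c * i.+1 -> window_equiv c (move_to_end n i.+2) (iota 1 n.+1).
Proof.
move=> le_n n_le.
have [e c_eq] : exists e, c = e.+2.
  exists (c - 2); suff: 1 < c by lia.
  by rewrite ltnNge; apply/negP => c_le1; move: n_le le_n; rewrite (_ : c = 1); lia.
have [m n_eq] : exists m, n = i + m.+1 + e.+1 by exists (n - c - i); lia.
(* V0 is squished because i.+1 sits at index n - c <= c * i; its
   lift ends in the window i.+1, ..., n.+1, i.+2, and swapping the last two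
   letters gives rcons V2 n.+1. *)
pose V0 := iota 1 i ++ iota i.+2 m ++ i.+1 :: iota (i + m).+2 e.+1.
pose E := iota (i + m).+3 e.
pose V2 := iota 1 i ++ iota i.+3 m ++ i.+1 :: E ++ [:: i.+2].
have iota_n : iota 1 n = iota 1 i ++ i.+1 :: iota i.+2 m ++ iota (i + m).+2 e.+1.
  by rewrite n_eq !iotaD !add1n /= addnS -catA.
have V0_perm : is_perm n V0.
  by rewrite /is_perm iota_n; apply/permP => p; rewrite !count_cat /= !count_cat /=; lia.
have V2_perm : is_perm n V2.
  rewrite /is_perm (_ : n = i + m.+2 + e); last by lia.
  rewrite /V2 /E !iotaD !add1n /= !addnS; apply/permP => p.
  by rewrite !count_cat /= !count_cat /=; lia.
have prefix_size M : size M = m -> i + size M <= c * i.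
  by move=> ->; move: n_le; rewrite mulnS; set ci := c * i; lia.
have V0_sq : squished c n V0.
  apply: squished_iota_cat => //; first by rewrite prefix_size ?size_iota.
  by rewrite mem_iota ltnn.
have V2_sq : squished c n V2.
  apply: squished_iota_cat => //; first by rewrite prefix_size ?size_iota.
  by rewrite mem_iota ltnNge leqnSn.
have lift_V0 : map (bump i.+2) V0 = iota 1 i ++ iota i.+3 m ++ i.+1 :: E ++ [:: n.+1].
  have bump_i : bump i.+2 i.+1 = i.+1 by rewrite /bump leqNgt ltnSn.
  rewrite /V0 map_cat map_bump_iota_lo ?add1n // map_cat map_bump_iota_hi //.
  rewrite map_cons bump_i map_bump_iota_hi; last by rewrite !ltnS leq_addr.
  rewrite -[e.+1]addn1 iotaD /E n_eq /=.
  by rewrite addnS addSn !addnS addSn.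
apply: (@rst_trans _ _ _ (rcons (map (bump i.+2) V0) i.+2)).
  by apply/rst_sym/window_equiv_lift/IH.
apply: (@rst_trans _ _ _ (rcons V2 n.+1)).
  rewrite lift_V0 /V2 -!cats1 -!catA /= -!catA /= catA [in X in _ _ X]catA.
  apply/rst_step/window_move_end.
  - by rewrite size_cat size_iota c_eq addn2.
  - by rewrite perm_cat2l (perm_catC [:: n.+1] [:: i.+2]).
  - rewrite all_cat /= andbT n_eq; apply/and3P; split; try lia.
    by apply/allP => z; rewrite mem_iota; lia.
by rewrite (@iota1_split n) // subSnn -cats1; apply: (window_equiv_cat [::]); apply: IH.
Qed.

End MoveToEndLow.

Lemma squished_window_equiv_iota c n w :
  0 < c -> c < n -> is_perm n w -> squished c n w -> window_equiv c w (iota 1 n).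
Proof.
move=> c_gt0; elim: n w => [//|n IH] w le_cn w_perm w_sq.
move: le_cn; rewrite ltnS leq_eqVlt => /predU1P[eq_cn | lt_cn].
  rewrite -eq_cn -[c.+1]add0n in w_perm w_sq *.
  apply: window_equiv_sorted_prefix => //.
  move: (w_sq 1 isT) (perm_size w_perm); rewrite muln0.
  by case: w {w_perm w_sq} => [|y w'] //=; rewrite take0 inE => /eqP <-.
case/lastP: w w_perm w_sq => [/perm_size // | U x] w_perm w_sq.
have [x_range xU _] := is_perm_rcons w_perm.
have x_bound := last_letter_bound w_perm w_sq.
rewrite -(map_bump_unbump xU).
apply: rst_trans (window_equiv_lift _ (IH _ _ _ _)) _ => //.
- exact: is_perm_unbump.
- exact: squished_unbump.
case: (ltnP (n - c) (x - 1)) => [high_x | low_x].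
  by apply: move_to_end_equiv_high; [exact: ltnW | | case/andP: x_range].
case: x x_range x_bound low_x {w_perm w_sq xU} => [// | [|i]] _.
  by rewrite muln0; lia.
rewrite !subSS !subn0 => x_bound low_x.
apply: (move_to_end_equiv_low c_gt0 (fun w => IH w lt_cn)) => //.
by move: low_x lt_cn; clear; lia.
Qed.

Lemma squished_extend c k n w :
  is_perm n w -> n <= c * k + 1 -> squished c k w -> squished c n w.
Proof.
move=> w_perm le_n w_sq j /andP[j_gt0 le_jn].
case: (leqP j k) => [le_jk | lt_kj]; first by apply: w_sq; rewrite j_gt0.
rewrite take_oversize ?(perm_mem w_perm) ?mem_iota ?j_gt0 ?add1n //.
rewrite (perm_size w_perm) size_iota (leq_trans le_n) // addn1 ltnS leq_mul2l.
by rewrite -ltnS subn1 prednK // lt_kj orbT.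
Qed.

Theorem lemma3p2 (c k n : nat) :
  1 <= c -> 1 <= k -> c.+1 <= n <= c * k + 1 ->
  forall w : seq nat, is_perm n w -> squished c k w ->
  repl_equiv c n w (iota 1 n).
Proof.
move=> c_gt0 _ /andP[lt_cn le_n] w w_perm w_sq.
apply: window_equiv_repl_equiv (w_perm) _.
by apply: squished_window_equiv_iota => //; apply: squished_extend w_perm le_n w_sq.
Qed.
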